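(* Let $H_{2n}$ denote the Kauffman bracket evaluation of the tetrahedron graph with all six edges colored $2n$. Then the tail of the sequence $\{H_{2n}\}_{n\in\mathbb{N}}$ is $$T(H_{2n})=\frac{(q;q)_\infty^3}{1-q}\sum_{i=0}^{\infty}\frac{(-1)^i q^{(i+3i^2)/2}}{(q;q)_i^3}.$$
   Context: $(q;q)_m=\prod_{k=1}^m(1-q^k)$ ($(q;q)_0=1$), $(q;q)_\infty=\prod_{k\ge1}(1-q^k)$. With $q=A^4$, the tetrahedron evaluation satisfies the closed form $$H_{2n}=\frac{q^{-2n}(q;q)_n^{12}}{(1-q)(q;q)_{2n}^6}\sum_{i=0}^{n}\frac{(-1)^i q^{(i+3i^2)/2}(q;q)_{4n-i}}{(q;q)_{n-i}^4(q;q)_i^3}.$$ Rational functions are identified with their Laurent series expansions in $q$ (normalized to lie in $\mathbb{Z}[q^{-1}][[q]]$). For non-zero Laurent series $P_1,P_2$, $P_1\doteq_nP_2$ means their first $n$ coefficients (starting from each one's minimal degree) agree up to a common sign. The tail of a sequence $\{P_n\}$ is the series $T$ of minimal degree $0$ with $T\doteq_nP_n$ for every $n$ (determined up to sign). *)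

(* Formal power series with integer coefficients are
   represented by their coefficient functions  nat -> int; Laurent series in
   Z[q^-1][[q]] by a pair (shift v, power series f) meaning q^v * f. *)
From HB Require Import structures.
From mathcomp Require Import all_boot all_order all_algebra.
Set Implicit Arguments. Unset Strict Implicit. Unset Printing Implicit Defensive.
Import Order.TTheory GRing.Theory Num.Theory.
Local Open Scope ring_scope.

Definition series := nat -> int.

Definition sone : series := fun k => ((k == 0)%N)%:Z.
Definition smono (e : nat) : series := fun k => ((k == e)%N)%:Z.
Definition sadd (f g : series) : series := fun k => f k + g k.
Definition sopp (f : series) : series := fun k => - f k.
Definition sscale (c : int) (f : series) : series := fun k => c * f k.
Definition smul (f g : series) : series :=
  fun k => \sum_(i < k.+1) f i * g (k - i)%N.
Definition spow (f : series) (e : nat) : series := iter e (smul f) sone.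

Definition qpoch (m : nat) : series :=
  foldr smul sone [seq sadd sone (sopp (smono k)) | k <- iota 1 m].
(* 1/(1-q^k) = sum_j q^{jk}, for k >= 1 *)
Definition geom (k : nat) : series := fun j => ((k %| j)%N)%:Z.
Definition qpochinv (m : nat) : series :=
  foldr smul sone [seq geom k | k <- iota 1 m].
(* (q;q)_oo : its coefficient of q^k equals that of (q;q)_k, since the
   factors (1-q^j), j > k, do not affect it. *)
Definition qpochinf : series := fun k => qpoch k k.

(* exponent (i + 3 i^2)/2 (always an integer) *)
Definition ex (i : nat) : nat := ((i + 3 * i ^ 2) %/ 2)%N.

Definition laurent := (int * series)%type.
Definition lcoef (P : laurent) (d : int) : int :=
  match d - P.1 with Posz k => P.2 k | Negz _ => 0 end.

Definition is_mindeg (P : laurent) (d : int) : Prop :=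
  lcoef P d != 0 /\ forall d', d' < d -> lcoef P d' = 0.

Definition deq (n : nat) (P1 P2 : laurent) : Prop :=
  exists d1 d2 (s : int), is_mindeg P1 d1 /\ is_mindeg P2 d2 /\
    (s = 1 \/ s = -1) /\
    forall k : nat, (k < n)%N -> lcoef P1 (d1 + k%:Z) = s * lcoef P2 (d2 + k%:Z).

Definition is_tail (T : laurent) (P : nat -> laurent) : Prop :=
  is_mindeg T 0 /\ forall n : nat, deq n T (P n).

(* H_{2n}, via the closed form of the context, expanded as a Laurent series *)
Definition Hsum (n : nat) : series :=
  fun k => \sum_(i < n.+1)
    smul (sscale ((-1) ^+ i) (smono (ex i)))
      (smul (qpoch (4 * n - i))
         (smul (spow (qpochinv (n - i)) 4) (spow (qpochinv i) 3))) k.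
Definition H2n (n : nat) : laurent :=
  (- (2 * n)%N%:Z,
   smul (spow (qpoch n) 12)
     (smul (geom 1) (smul (spow (qpochinv (2 * n)) 6) (Hsum n)))).

(* sum_{i>=0} (-1)^i q^{(i+3i^2)/2} / (q;q)_i^3 ; since ex i >= i, only the
   terms i <= k contribute to the coefficient of q^k *)
Definition tailsum : series :=
  fun k => \sum_(i < k.+1)
    smul (sscale ((-1) ^+ i) (smono (ex i))) (spow (qpochinv i) 3) k.

Definition tailT : laurent :=
  (0, smul (spow qpochinf 3) (smul (geom 1) tailsum)).

(** Truncate everything modulo [q^(n+1)]: there the finite products
    [(q;q)_m], [m >= n], all agree with [(q;q)_n], and so do their
    reciprocals.  In the [i]-th summand of [H_2n] the factor [q^((i+3i^2)/2)]
    with [(i+3i^2)/2 >= i] lets one replace [(q;q)_(n-i)] by [(q;q)_n], and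
    then, up to the power [q^(-2n)] that only shifts degrees, [H_2n] is
    [((q;q)_n (q;q)_n^-1)^10] times the tail truncated at [q^(n+1)].  Hence
    both series have constant coefficient [1] and agree on their first
    [n+1] coefficients. *)
From HB Require Import structures.
From mathcomp Require Import all_boot all_order all_algebra.
From mathcomp Require Import ring zify.
Set Implicit Arguments. Unset Strict Implicit. Unset Printing Implicit Defensive.
Import Order.TTheory GRing.Theory Num.Theory.
Local Open Scope ring_scope.

Definition eqmodXn (R : comNzRingType) (N : nat) (p q : {poly R}) :=
  exists r : {poly R}, p - q = 'X^N * r.

Section EqModXn.
Variables (R : comNzRingType) (N : nat).
Implicit Types p q u v : {poly R}.

Lemma eqmodXn_refl p : eqmodXn N p p.
Proof. by exists 0; rewrite subrr mulr0. Qed.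

Lemma eqmodXn_sym p q : eqmodXn N p q -> eqmodXn N q p.
Proof. by case=> r pq; exists (- r); rewrite -opprB pq mulrN. Qed.

Lemma eqmodXn_trans p q u : eqmodXn N p q -> eqmodXn N q u -> eqmodXn N p u.
Proof.
case=> r1 pq [r2 qu]; exists (r1 + r2).
by rewrite mulrDr -pq -qu addrA subrK.
Qed.

Lemma eqmodXnD p1 p2 q1 q2 : eqmodXn N p1 q1 -> eqmodXn N p2 q2 ->
  eqmodXn N (p1 + p2) (q1 + q2).
Proof.
case=> r1 E1 [r2 E2]; exists (r1 + r2).
by rewrite opprD addrACA E1 E2 mulrDr.
Qed.

Lemma eqmodXnM p1 p2 q1 q2 : eqmodXn N p1 q1 -> eqmodXn N p2 q2 ->
  eqmodXn N (p1 * p2) (q1 * q2).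
Proof.
case=> r1 E1 [r2 E2]; exists (r1 * p2 + q1 * r2).
have -> : p1 * p2 - q1 * q2 = (p1 - q1) * p2 + q1 * (p2 - q2) by ring.
by rewrite E1 E2; ring.
Qed.

Lemma eqmodXnX p q m : eqmodXn N p q -> eqmodXn N (p ^+ m) (q ^+ m).
Proof.
move=> pq; elim: m => [|m IHm]; first exact: eqmodXn_refl.
by rewrite !exprS; apply: eqmodXnM.
Qed.

Lemma eqmodXn_sum (I : Type) (r : seq I) (P : pred I) (F G : I -> {poly R}) :
  (forall i, P i -> eqmodXn N (F i) (G i)) ->
  eqmodXn N (\sum_(i <- r | P i) F i) (\sum_(i <- r | P i) G i).
Proof.
move=> FG; apply: (big_ind2 (eqmodXn N)) => //; first exact: eqmodXn_refl.
by move=> *; apply: eqmodXnD.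
Qed.

Lemma eqmodXn_prod (I : eqType) (r : seq I) (F G : I -> {poly R}) :
  (forall i, i \in r -> eqmodXn N (F i) (G i)) ->
  eqmodXn N (\prod_(i <- r) F i) (\prod_(i <- r) G i).
Proof.
move=> FG; rewrite big_seq [X in eqmodXn _ _ X]big_seq.
apply: (big_ind2 (eqmodXn N)) => //; first exact: eqmodXn_refl.
by move=> *; apply: eqmodXnM.
Qed.

Lemma eqmodXn_prod1 (I : eqType) (r : seq I) (F : I -> {poly R}) :
  (forall i, i \in r -> eqmodXn N (F i) 1) -> eqmodXn N (\prod_(i <- r) F i) 1.
Proof.
move=> F1; rewrite -[X in eqmodXn _ _ X](@big1_eq {poly R} 1 *%R _ r xpredT).
exact: eqmodXn_prod.
Qed.

Lemma eqmodXn_coef p q k : eqmodXn N p q -> (k < N)%N -> p`_k = q`_k.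
Proof.
by case=> r pq ltkN; rewrite -(subrK q p) pq coefD coefXnM ltkN add0r.
Qed.

Lemma eqmodXn_mulXn e p q :
  eqmodXn N p q -> eqmodXn (e + N) ('X^e * p) ('X^e * q).
Proof. by case=> r pq; exists r; rewrite -mulrBr pq mulrA -exprD. Qed.

Lemma eqmodXn_inv p q u v : eqmodXn N (p * u) 1 -> eqmodXn N (q * v) 1 ->
  eqmodXn N p q -> eqmodXn N u v.
Proof.
move=> pu qv pq.
have uqv : eqmodXn N u (u * (q * v)).
  rewrite -[X in eqmodXn _ X _]mulr1.
  exact/eqmodXnM/eqmodXn_sym/qv/eqmodXn_refl.
apply: (eqmodXn_trans uqv); rewrite mulrA -[X in eqmodXn _ _ X]mul1r.
apply: eqmodXnM (eqmodXn_refl _); rewrite mulrC.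
exact: eqmodXn_trans (eqmodXnM (eqmodXn_sym pq) (eqmodXn_refl u)) pu.
Qed.

End EqModXn.

Lemma eqmodXn_leq (R : comNzRingType) M N (p q : {poly R}) :
  (M <= N)%N -> eqmodXn N p q -> eqmodXn M p q.
Proof.
by move=> leMN [r pq]; exists ('X^(N - M) * r); rewrite mulrA -exprD subnKC.
Qed.

Definition agrees (N : nat) (f : series) (p : {poly int}) :=
  forall k, (k < N)%N -> f k = p`_k.

Section Agrees.
Variable N : nat.

Lemma agrees_eqmodXn f p q : agrees N f p -> eqmodXn N p q -> agrees N f q.
Proof. by move=> fp pq k ltkN; rewrite fp // (eqmodXn_coef pq). Qed.

Lemma agrees_sone : agrees N sone 1.
Proof. by move=> k _; rewrite coef1 natz. Qed.

Lemma agrees_smono e : agrees N (smono e) 'X^e.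
Proof. by move=> k _; rewrite coefXn natz. Qed.

Lemma agrees_sadd f g p q :
  agrees N f p -> agrees N g q -> agrees N (sadd f g) (p + q).
Proof. by move=> fp gq k ltkN; rewrite coefD /sadd fp ?gq. Qed.

Lemma agrees_sopp f p : agrees N f p -> agrees N (sopp f) (- p).
Proof. by move=> fp k ltkN; rewrite coefN /sopp fp. Qed.

Lemma agrees_sscale c f p : agrees N f p -> agrees N (sscale c f) (c%:P * p).
Proof. by move=> fp k ltkN; rewrite coefCM /sscale fp. Qed.

Lemma agrees_smul f g p q :
  agrees N f p -> agrees N g q -> agrees N (smul f g) (p * q).
Proof.
move=> fp gq k ltkN; rewrite coefM /smul; apply: eq_bigr => j _.
have lejk : (j <= k)%N by rewrite -ltnS.
rewrite fp ?gq //; first exact: leq_ltn_trans (leq_subr j k) ltkN.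
exact: leq_ltn_trans ltkN.
Qed.

Lemma agrees_spow f p e : agrees N f p -> agrees N (spow f e) (p ^+ e).
Proof.
move=> fp; elim: e => [|e IHe]; first exact: agrees_sone.
by rewrite exprS; apply: agrees_smul.
Qed.

Lemma agrees_foldr_smul (s : seq nat) (F : nat -> series)
    (P : nat -> {poly int}) :
  (forall x, x \in s -> agrees N (F x) (P x)) ->
  agrees N (foldr smul sone [seq F x | x <- s]) (\prod_(x <- s) P x).
Proof.
elim: s => [|x s IHs] FP; first by rewrite big_nil; apply: agrees_sone.
rewrite big_cons; apply: agrees_smul; first by apply: FP; rewrite inE eqxx.
by apply: IHs => y ys; apply: FP; rewrite inE ys orbT.
Qed.

Lemma agrees_sum (I : finType) (F : I -> series) (P : I -> {poly int}) :
  (forall i, agrees N (F i) (P i)) ->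
  agrees N (fun k => \sum_(i : I) F i k) (\sum_(i : I) P i).
Proof.
by move=> FP k ltkN; rewrite coef_sum; apply: eq_bigr => i _; apply: FP.
Qed.

End Agrees.

Definition qpoch_poly (m : nat) : {poly int} :=
  \prod_(j <- iota 1 m) (1 - 'X^j).
Definition geom_poly (N k : nat) : {poly int} := \sum_(t < N) 'X^(k * t).
Definition qpochinv_poly (N m : nat) : {poly int} :=
  \prod_(j <- iota 1 m) geom_poly N j.

Lemma agrees_qpoch N m : agrees N (qpoch m) (qpoch_poly m).
Proof.
apply: agrees_foldr_smul => x _.
exact/agrees_sadd/agrees_sopp/agrees_smono/agrees_sone.
Qed.

Lemma coef_geom_poly N k j : (0 < k)%N -> (j < N)%N ->
  (geom_poly N k)`_j = ((k %| j)%N)%:Z.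
Proof.
move=> k_gt0 ltjN; rewrite /geom_poly coef_sum.
under eq_bigr do rewrite coefXn natz.
have [kj|] := boolP (k %| j)%N; last first.
  move=> nkj; rewrite big1 // => t _; apply/eqP; rewrite eqz_nat eqb0.
  by apply: contra nkj => /eqP->; apply: dvdn_mulr.
have ltjkN : (j %/ k < N)%N by apply: leq_ltn_trans (leq_div j k) ltjN.
rewrite (bigD1 (Ordinal ltjkN)) //= mulnC divnK // eqxx big1 ?addr0 //.
move=> t /eqP ne; apply/eqP; rewrite eqz_nat eqb0; apply/eqP => jE.
by apply: ne; apply: val_inj; rewrite /= jE mulKn.
Qed.

Lemma agrees_geom N k : (0 < k)%N -> agrees N (geom k) (geom_poly N k).
Proof. by move=> k_gt0 j ltjN; rewrite coef_geom_poly. Qed.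

Lemma agrees_qpochinv N m : agrees N (qpochinv m) (qpochinv_poly N m).
Proof.
apply: agrees_foldr_smul => x; rewrite mem_iota => /andP[x_gt0 _].
exact: agrees_geom.
Qed.

Lemma geom_polyK N k : (0 < k)%N -> eqmodXn N ((1 - 'X^k) * geom_poly N k) 1.
Proof.
move=> k_gt0.
have -> : (1 - 'X^k) * geom_poly N k = 1 - 'X^(k * N).
  have step t :
      (1 - 'X^k) * 'X^(k * t) = - ('X^(k * t.+1) - 'X^(k * t) : {poly int}).
    by rewrite mulnS exprD; ring.
  rewrite /geom_poly mulr_sumr (eq_bigr _ (fun (t : 'I_N) _ => step t)) sumrN.
  rewrite -(big_mkord xpredT (fun t => 'X^(k * t.+1) - 'X^(k * t))).
  by rewrite telescope_sumr // muln0 expr0 opprB.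
exists (- 'X^(k * N - N)).
by rewrite addrAC subrr add0r mulrN -exprD subnKC // leq_pmull.
Qed.

Lemma qpoch_polyK N m : eqmodXn N (qpoch_poly m * qpochinv_poly N m) 1.
Proof.
rewrite -big_split /=; apply: eqmodXn_prod1 => j.
by rewrite mem_iota => /andP[j_gt0 _]; apply: geom_polyK.
Qed.

Lemma qpoch_poly_eqmodXn a m : (a <= m)%N ->
  eqmodXn a.+1 (qpoch_poly m) (qpoch_poly a).
Proof.
move=> leam; rewrite /qpoch_poly -(subnKC leam) iotaD big_cat add1n /=.
rewrite -[X in eqmodXn _ _ X]mulr1; apply: eqmodXnM; first exact: eqmodXn_refl.
apply: eqmodXn_prod1 => j; rewrite mem_iota => /andP[ltaj _].
by exists (- 'X^(j - a.+1)); rewrite mulrN -exprD subnKC // addrAC subrr add0r.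
Qed.

Lemma qpochinv_poly_eqmodXn N a m : (a <= m)%N -> (a < N)%N ->
  eqmodXn a.+1 (qpochinv_poly N m) (qpochinv_poly N a).
Proof.
move=> leam ltaN.
apply: (eqmodXn_inv (eqmodXn_leq ltaN (qpoch_polyK N m))).
  exact: eqmodXn_leq ltaN (qpoch_polyK N a).
exact: qpoch_poly_eqmodXn.
Qed.

Lemma leq_ex i : (i <= ex i)%N.
Proof.
by rewrite /ex -{1}(mulKn i (isT : (0 < 2)%N)); apply: leq_div2r; nia.
Qed.

Lemma agrees_qpochinf n : agrees n.+1 qpochinf (qpoch_poly n).
Proof.
move=> k ltkn; rewrite /qpochinf (agrees_qpoch _ (ltnSn k)).
by rewrite (eqmodXn_coef (qpoch_poly_eqmodXn (ltkn : (k <= n)%N))).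
Qed.

Section Truncation.
Variable n : nat.
Local Notation N := n.+1.
Local Notation P := (qpoch_poly n).
Local Notation I := (qpochinv_poly N n).

Definition tail_term (i : nat) : {poly int} :=
  ((-1) ^+ i)%:P * 'X^(ex i) * qpochinv_poly N i ^+ 3.
Definition tail_poly : {poly int} := \sum_(i < N) tail_term i.
Definition tailT_poly : {poly int} := P ^+ 3 * (geom_poly N 1 * tail_poly).

Lemma coef_tail_term_small i k : (k < i)%N -> (tail_term i)`_k = 0.
Proof.
move=> ltki; rewrite /tail_term -mulrA coefCM coefXnM.
by rewrite (leq_trans ltki (leq_ex i)) mulr0.
Qed.

Lemma agrees_tailsum : agrees N tailsum tail_poly.
Proof.
move=> k ltkN; rewrite /tailsum /tail_poly coef_sum.
have summandE i :
    smul (sscale ((-1) ^+ i) (smono (ex i))) (spow (qpochinv i) 3) k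
      = (tail_term i)`_k.
  apply: (agrees_smul _ _ ltkN); first exact/agrees_sscale/agrees_smono.
  exact/agrees_spow/agrees_qpochinv.
under eq_bigr do rewrite summandE.
rewrite (big_ord_widen _ (fun i => (tail_term i)`_k) ltkN) big_mkcond /=.
apply: eq_bigr => i _; case: ifP => // /negbT; rewrite -leqNgt.
by move/coef_tail_term_small.
Qed.

Definition Hsum_term (i : nat) : {poly int} :=
  ((-1) ^+ i)%:P * 'X^(ex i) *
    (qpoch_poly (4 * n - i) *
      (qpochinv_poly N (n - i) ^+ 4 * qpochinv_poly N i ^+ 3)).

Lemma Hsum_term_eqmodXn i : (i <= n)%N ->
  eqmodXn N (Hsum_term i) (P * I ^+ 4 * tail_term i).
Proof.
move=> lein; rewrite /Hsum_term /tail_term.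
set c := ((-1) ^+ i)%:P; set e := ex i; set K := qpochinv_poly N i ^+ 3.
set A := qpoch_poly (4 * n - i) * qpochinv_poly N (n - i) ^+ 4.
(* Only [q^(n-i+1)]-precision holds without the shift; [ex i >= i] restores
   precision [q^(n+1)]. *)
have shifted : eqmodXn N ('X^e * A) ('X^e * (P * I ^+ 4)).
  apply: (@eqmodXn_leq _ _ (e + (n - i).+1)).
    by have := leq_ex i; rewrite -/e; lia.
  apply: eqmodXn_mulXn; apply: eqmodXnM.
    apply: (eqmodXn_trans (qpoch_poly_eqmodXn _)); first by lia.
    exact/eqmodXn_sym/qpoch_poly_eqmodXn/leq_subr.
  by apply/eqmodXnX/eqmodXn_sym/qpochinv_poly_eqmodXn; lia.
have -> : c * 'X^e *
    (qpoch_poly (4 * n - i) * (qpochinv_poly N (n - i) ^+ 4 * K))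
    = c * K * ('X^e * A) by rewrite /A; ring.
have -> : P * I ^+ 4 * (c * 'X^e * K) = c * K * ('X^e * (P * I ^+ 4)) by ring.
apply: eqmodXnM; [exact: eqmodXn_refl | exact: shifted].
Qed.

Lemma agrees_Hsum : agrees N (Hsum n) (P * I ^+ 4 * tail_poly).
Proof.
apply: (@agrees_eqmodXn _ _ (\sum_(i < N) Hsum_term i)).
  rewrite /Hsum; apply: agrees_sum => i.
  apply: agrees_smul; first exact/agrees_sscale/agrees_smono.
  apply: agrees_smul; first exact: agrees_qpoch.
  by apply: agrees_smul; apply/agrees_spow/agrees_qpochinv.
rewrite /tail_poly mulr_sumr; apply: eqmodXn_sum => i _.
by apply: Hsum_term_eqmodXn; rewrite -ltnS.
Qed.

Lemma agrees_H2n : agrees N (H2n n).2 tailT_poly.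
Proof.
set D := qpochinv_poly N (2 * n).
have expanded : agrees N (H2n n).2
    (P ^+ 12 * (geom_poly N 1 * (D ^+ 6 * (P * I ^+ 4 * tail_poly)))).
  apply: agrees_smul; first exact/agrees_spow/agrees_qpoch.
  apply: agrees_smul; first exact: agrees_geom.
  apply: agrees_smul; last exact: agrees_Hsum.
  exact/agrees_spow/agrees_qpochinv.
apply: (agrees_eqmodXn expanded).
have DI : eqmodXn N D I by apply: qpochinv_poly_eqmodXn => //; lia.
apply: (@eqmodXn_trans _ _ _
  (P ^+ 12 * (geom_poly N 1 * (I ^+ 6 * (P * I ^+ 4 * tail_poly))))).
  do 2 (apply: eqmodXnM; first exact: eqmodXn_refl).
  by apply: eqmodXnM; [apply: eqmodXnX | apply: eqmodXn_refl].
have -> : P ^+ 12 * (geom_poly N 1 * (I ^+ 6 * (P * I ^+ 4 * tail_poly))) =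
  (P * I) ^+ 10 * tailT_poly by rewrite /tailT_poly; ring.
rewrite -[X in eqmodXn _ _ X]mul1r -(expr1n _ 10).
by apply: eqmodXnM; [apply/eqmodXnX/qpoch_polyK | apply: eqmodXn_refl].
Qed.

Lemma agrees_tailT : agrees N tailT.2 tailT_poly.
Proof.
apply: agrees_smul; first exact/agrees_spow/agrees_qpochinf.
by apply: agrees_smul; [apply: agrees_geom | apply: agrees_tailsum].
Qed.

End Truncation.

Lemma lcoef_shift (L : laurent) (k : nat) : lcoef L (L.1 + k%:Z) = L.2 k.
Proof. by rewrite /lcoef addrAC subrr add0r. Qed.

Lemma is_mindeg_head (L : laurent) : L.2 0%N != 0 -> is_mindeg L L.1.
Proof.
move=> L0; split; first by rewrite -[L.1]addr0 lcoef_shift.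
move=> d ltd; rewrite /lcoef; case E: (d - L.1) => [k|k] //.
by move: ltd; rewrite -subr_lt0 E.
Qed.

Lemma deq_head n (L1 L2 : laurent) : L1.2 0%N != 0 ->
  (forall k, (k <= n)%N -> L1.2 k = L2.2 k) -> deq n L1 L2.
Proof.
move=> L10 L12; exists L1.1, L2.1, 1; split; first exact: is_mindeg_head.
split; first by apply: is_mindeg_head; rewrite -L12.
split; first by left.
by move=> k ltkn; rewrite !lcoef_shift mul1r L12 // ltnW.
Qed.

Lemma tailT_coef0 : tailT.2 0%N = 1.
Proof. by rewrite /= /smul /tailsum /spow /= !big_ord1 /= /smul !big_ord1. Qed.

Theorem mainTheorem7 : is_tail tailT H2n.
Proof.
have tail0 : tailT.2 0%N != 0 by rewrite tailT_coef0.
split; first exact: is_mindeg_head.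
move=> n; apply: deq_head => // k lekn.
by rewrite (agrees_tailT lekn) (agrees_H2n lekn).
Qed.
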